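(* Let $(Z, S(1), S(0), Y(1), Y(0), \mathbf{X})$ be random variables with $Z\in\{0,1\}$, $S(z)\in\{0,1\}$, $Y(z)$ real-valued, $\mathbf{X}$ a covariate vector, observed $S=S(Z)$, and assume Randomization: $Z \perp\!\!\!\perp \{S(1),S(0),Y(1),Y(0),\mathbf{X}\}$. Assume Monotonicity ($S(1)\ge S(0)$ a.s.) and General Principal Ignorability ($Y(z)\perp\!\!\!\perp U\mid \mathbf{X}$ for $z=0,1$). Then $Y(1)\perp\!\!\!\perp U\mid\{Z=1,S=1,e_{1,u}(\mathbf{X})\}$ for $u=s\bar{s}$ and $u=ss$, and $Y(0)\perp\!\!\!\perp U\mid\{Z=0,S=0,e_{0,u}(\mathbf{X})\}$ for $u=s\bar{s}$ and $u=\bar{s}\bar{s}$.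
   Context: The principal stratum is $U=(S(1),S(0))$, whose values $(1,1),(1,0),(0,1),(0,0)$ are labelled $ss, s\bar{s}, \bar{s}s, \bar{s}\bar{s}$. Principal scores: $e_u(\mathbf{X}) = \Pr(U=u\mid \mathbf{X})$. Define $e_{1,s\bar{s}}(\mathbf{X}) = e_{s\bar{s}}(\mathbf{X})/\{e_{s\bar{s}}(\mathbf{X})+e_{ss}(\mathbf{X})\}$, $e_{1,ss}(\mathbf{X}) = e_{ss}(\mathbf{X})/\{e_{s\bar{s}}(\mathbf{X})+e_{ss}(\mathbf{X})\}$, $e_{0,s\bar{s}}(\mathbf{X}) = e_{s\bar{s}}(\mathbf{X})/\{e_{s\bar{s}}(\mathbf{X})+e_{\bar{s}\bar{s}}(\mathbf{X})\}$, $e_{0,\bar{s}\bar{s}}(\mathbf{X}) = e_{\bar{s}\bar{s}}(\mathbf{X})/\{e_{s\bar{s}}(\mathbf{X})+e_{\bar{s}\bar{s}}(\mathbf{X})\}$. Conditioning events and denominators are assumed positive. *)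

From HB Require Import structures.
From mathcomp Require Import all_boot all_order all_algebra.
From mathcomp Require Import all_classical all_reals all_analysis.
Set Implicit Arguments. Unset Strict Implicit. Unset Printing Implicit Defensive.
Import Order.TTheory GRing.Theory Num.Theory.
Local Open Scope classical_set_scope.
Local Open Scope ring_scope.

(* Principal strata U = (S(1), S(0)) : bool * bool. *)
Definition ss    : bool * bool := (true, true).
Definition ssbar : bool * bool := (true, false).
Definition sbars : bool * bool := (false, true).
Definition sbarsbar : bool * bool := (false, false).

(* Conditional independence of Y and U given (the event A and) the random
   variable W, for U taking values in a finite (discrete) type K:
   for every Borel set B there is a version h(W) of Pr(Y in B | W, A) such that
   Pr(Y in B | U, W, A) = h(W) a.s. on A, i.e.
   P(A /\ Y in B /\ U = u /\ W in C) = \int_{A /\ U = u /\ W in C} h(W) dP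
   for all u and all measurable C.  (Standard characterization of
   conditional independence: the conditional law of Y given (U,W) depends on W only.) *)
Definition cond_indep {d dW} {Omega : measurableType d} {R : realType}
  {TW : measurableType dW} {K : Type}
  (P : probability Omega R) (A : set Omega) (Y : Omega -> R) (U : Omega -> K)
  (W : Omega -> TW) : Prop :=
  forall B : set R, measurable B ->
    exists h : TW -> R,
      [/\ measurable_fun setT h,
          (forall w, 0 <= h w <= 1) &
          forall (u : K) (C : set TW), measurable C ->
            P (A `&` Y @^-1` B `&` U @^-1` [set u] `&` W @^-1` C) =
            (\int[P]_(x in A `&` U @^-1` [set u] `&` W @^-1` C) (h (W x))%:E)%E].

Definition principal_scores {d dX} {Omega : measurableType d} {R : realType}
  {TX : measurableType dX} (P : probability Omega R)
  (U : Omega -> bool * bool) (X : Omega -> TX) (e : bool * bool -> TX -> R) : Prop :=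
  forall u : bool * bool,
    [/\ measurable_fun setT (e u),
        (forall x, 0 <= e u x <= 1) &
        forall C : set TX, measurable C ->
          P (U @^-1` [set u] `&` X @^-1` C) =
          (\int[P]_(w in X @^-1` C) (e u (X w))%:E)%E].

Definition e1 {TX : Type} {R : realType} (e : bool * bool -> TX -> R) (u : bool * bool)
  (x : TX) : R := e u x / (e ssbar x + e ss x).
Definition e0 {TX : Type} {R : realType} (e : bool * bool -> TX -> R) (u : bool * bool)
  (x : TX) : R := e u x / (e ssbar x + e sbarsbar x).

From HB Require Import structures.
From mathcomp Require Import all_boot all_order all_algebra.
From mathcomp Require Import all_classical all_reals all_analysis.
From mathcomp Require Import measurable_realfun.
Import Order.TTheory GRing.Theory Num.Theory.
Local Open Scope classical_set_scope.
Local Open Scope ring_scope.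
Set Implicit Arguments. Unset Strict Implicit. Unset Printing Implicit Defensive.
Import HBNNSimple.

(* On {Z = z} the event {S = z} is exactly {U in {a, b}} for two strata a, b,
   and randomization makes {Z = z} independent of (Y, U, X), so intersecting
   with it multiplies both sides of the defining identities of conditional
   independence by Pr(Z = z).  It thus suffices that Y is independent of U
   given w(X) within {U in {a, b}}, where w = e_u0 / (e_a + e_b).  There
   e_u = k_u(w) (e_a + e_b) with k_u(t) = t or 1 - t, so the law of X on
   {U = u} (and, by principal ignorability, on {Y in B, U = u}) has density
   k_u(w(X)) with respect to its law on {U in {a, b}} (on {Y in B, U in {a, b}}).
   Hence Pr(Y in B | U = u, w(X)) = h(w(X)) for both u, where h is the
   Radon-Nikodym derivative of the law of w(X) on {Y in B, U in {a, b}} with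
   respect to its law on {U in {a, b}}. *)

Section image_density.
Local Open Scope ereal_scope.
Context d d' (T : measurableType d) (T' : measurableType d') (R : realType).
Variables (m : {measure set T -> \bar R}) (n : {measure set T' -> \bar R}).
Variables (X : T -> T') (D : set T) (phi : T -> R).
Hypotheses (mX : measurable_fun setT X) (mD : measurable D)
  (mphi : measurable_fun setT phi) (phi0 : forall x, (0 <= phi x)%R).
Hypothesis nE : forall E, measurable E ->
  n E = \int[m]_(x in D `&` X @^-1` E) (phi x)%:E.

Let mDX E : measurable E -> measurable (D `&` X @^-1` E).
Proof.
by move=> mE; apply: measurableI => //; rewrite -[X in measurable X]setTI; exact: mX.
Qed.

Lemma integral_indic_image_density A E : measurable A -> measurable E ->
  \int[n]_(y in E) (\1_A y)%:E =
  \int[m]_(x in D `&` X @^-1` E) ((\1_A (X x))%:E * (phi x)%:E).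
Proof.
move=> mA mE; rewrite integral_indic // nE; last exact: measurableI.
rewrite (_ : D `&` _ = (D `&` X @^-1` E) `&` X @^-1` A); last first.
  by apply/seteqP; split => x /=; tauto.
rewrite integral_mkcondr; apply: eq_integral => x _.
by rewrite epatch_indic /= muleC.
Qed.

Lemma ge0_integral_nnsfun_image_density (f : {nnsfun T' >-> R}) E :
  measurable E ->
  \int[n]_(y in E) (f y)%:E =
  \int[m]_(x in D `&` X @^-1` E) ((f (X x))%:E * (phi x)%:E).
Proof.
move=> mE.
under eq_integral do rewrite fimfunE -fsumEFin //.
under [RHS]eq_integral => x _.
  rewrite fimfunE -fsumEFin // ge0_mule_fsuml; last first.
    by move=> r; rewrite EFinM; exact: nnfun_muleindic_ge0.
  over.
rewrite ge0_integral_fsum //; last 2 first.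
- by move=> r; apply/measurable_EFinP; apply: measurable_funM.
- by move=> r y _; exact: nnfun_muleindic_ge0.
rewrite ge0_integral_fsum //; last 3 first.
- exact: mDX.
- move=> r; apply: emeasurable_funM; apply/measurable_funTS/measurable_EFinP => //.
  by apply: measurable_funM => //; apply: measurableT_comp => //; exact: measurable_indic.
- by move=> r x _; rewrite mule_ge0 ?nnfun_muleindic_ge0 ?lee_fin.
apply: eq_fsbigr => r; rewrite inE => -[t _ <-].
under eq_integral do rewrite EFinM.
under [RHS]eq_integral do rewrite EFinM -muleA.
rewrite !ge0_integralZl ?lee_fin //; last 4 first.
- exact: mDX.
- apply: emeasurable_funM; apply/measurable_funTS/measurable_EFinP => //.
  by apply: measurableT_comp => //; exact: measurable_indic.
- by move=> x _; rewrite mule_ge0 ?lee_fin.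
- by apply/measurable_EFinP; exact: measurable_indic.
by rewrite integral_indic_image_density.
Qed.

Lemma ge0_integral_image_density (psi : T' -> \bar R) E : measurable E ->
  measurable_fun E psi -> (forall y, E y -> 0 <= psi y) ->
  \int[n]_(y in E) psi y =
  \int[m]_(x in D `&` X @^-1` E) (psi (X x) * (phi x)%:E).
Proof.
move=> mE mpsi psi0; pose f := nnsfun_approx mE mpsi.
have psiE y : E y -> psi y = lim ((f k y)%:E @[k --> \oo]).
  by move=> Ey; apply/esym/cvg_lim => //; exact: cvg_nnsfun_approx.
have f_nd y : {homo (fun k => (f k y)%:E) : a b / (a <= b)%N >-> a <= b}.
  by move=> a b ab; rewrite lee_fin; exact/lefP/nd_nnsfun_approx.
transitivity (lim (\int[n]_(y in E) (f k y)%:E @[k --> \oo])).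
  under eq_integral => y /[!inE] /psiE -> //.
  apply: monotone_convergence => // k.
  - exact/measurable_EFinP/measurable_funTS.
  - by move=> y _; rewrite lee_fin.
transitivity (lim (\int[m]_(x in D `&` X @^-1` E)
    ((f k (X x))%:E * (phi x)%:E) @[k --> \oo])).
  by under eq_fun do rewrite ge0_integral_nnsfun_image_density //.
have prodE x : (D `&` X @^-1` E) x ->
    psi (X x) * (phi x)%:E = lim ((f k (X x))%:E * (phi x)%:E @[k --> \oo]).
  move=> [_ EXx]; apply/esym/cvg_lim => //.
  by apply: cvgeZr => //; exact: cvg_nnsfun_approx.
under [RHS]eq_integral => x /[!inE] /prodE -> //.
apply/esym; apply: monotone_convergence => [|k| |]; first exact: mDX.
- apply: emeasurable_funM; apply/measurable_funTS/measurable_EFinP => //.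
  exact: measurableT_comp.
- by move=> k x _; rewrite mule_ge0 ?lee_fin.
- by move=> x _ a b ab; rewrite lee_wpmul2r ?lee_fin //; exact: f_nd.
Qed.

End image_density.

Section restricted_law.
Local Open Scope ereal_scope.
Context d d' (T : measurableType d) (T' : measurableType d') (R : realType).
Variables (mu : {finite_measure set T -> \bar R}) (D : set T) (mD : measurable D).
Variables (f : T -> T') (mf : measurable_fun setT f).

Let law := pushforward (mrestr mu mD) f.

Let law0 : law set0 = 0. Proof. exact: measure0. Qed.

Let law_ge0 A : 0 <= law A. Proof. exact: measure_ge0. Qed.

Let law_sigma_additive : semi_sigma_additive law.
Proof. exact: measure_semi_sigma_additive. Qed.

HB.instance Definition _ := isMeasure.Build _ _ _ law law0 law_ge0 law_sigma_additive.

Let law_fin : fin_num_fun law.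
Proof.
move=> A mA; apply: fin_num_measure.
by rewrite -[X in measurable X]setTI; exact: mf.
Qed.

HB.instance Definition _ := Measure_isFinite.Build _ _ _ law law_fin.

Definition restricted_law : {finite_measure set T' -> \bar R} := law.

End restricted_law.

Section restricted_law_integral.
Local Open Scope ereal_scope.
Context d d' (T : measurableType d) (T' : measurableType d') (R : realType).
Variable mu : {finite_measure set T -> \bar R}.

Lemma restricted_lawE D (mD : measurable D) (f : T -> T') (mf : measurable_fun setT f) C :
  restricted_law mu mD mf C = mu (D `&` f @^-1` C).
Proof. by rewrite /= /pushforward /mrestr setIC. Qed.

Lemma ge0_integral_restricted_law D (mD : measurable D) (f : T -> T')
    (mf : measurable_fun setT f) (psi : T' -> \bar R) E :
  measurable E -> measurable_fun E psi -> (forall y, E y -> 0 <= psi y) ->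
  \int[restricted_law mu mD mf]_(y in E) psi y =
  \int[mu]_(x in D `&` f @^-1` E) psi (f x).
Proof.
move=> mE mpsi psi0.
rewrite (@ge0_integral_image_density _ _ _ _ _ mu _ f D (cst 1%R)) //.
- by under eq_integral do rewrite mule1.
- move=> C mC; rewrite [LHS](restricted_lawE mD mf) /= integral_cst ?mul1e //.
  by apply: measurableI => //; rewrite -[X in measurable X]setTI; exact: mf.
Qed.

Lemma ge0_integral_density_transfer (X : T -> T') (mX : measurable_fun setT X)
    D1 D2 (mD1 : measurable D1) (mD2 : measurable D2) (phi : T -> R) :
  measurable_fun setT phi -> (forall x, (0 <= phi x)%R) ->
  (forall E, measurable E ->
    mu (D1 `&` X @^-1` E) = \int[mu]_(x in D2 `&` X @^-1` E) (phi x)%:E) ->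
  forall (psi : T' -> \bar R) E, measurable E -> measurable_fun E psi ->
  (forall y, E y -> 0 <= psi y) ->
  \int[mu]_(x in D1 `&` X @^-1` E) psi (X x) =
  \int[mu]_(x in D2 `&` X @^-1` E) (psi (X x) * (phi x)%:E).
Proof.
move=> mphi phi0 D1E psi E mE mpsi psi0.
rewrite -(ge0_integral_restricted_law mD1 mX) //.
apply: ge0_integral_image_density => // C mC.
by rewrite [LHS](restricted_lawE mD1 mX) D1E.
Qed.

End restricted_law_integral.

Section conditional_probability.
Local Open Scope ereal_scope.
Context d d' (T : measurableType d) (T' : measurableType d') (R : realType).
Variables (mu : {finite_measure set T -> \bar R}) (V : T -> T').
Hypothesis mV : measurable_fun setT V.

Let mDV D C : measurable D -> measurable C -> measurable (D `&` V @^-1` C).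
Proof.
by move=> mD mC; apply: measurableI => //; rewrite -[X in measurable X]setTI; exact: mV.
Qed.

Lemma restricted_law_dominates D' D (mD' : measurable D') (mD : measurable D) :
  D' `<=` D -> restricted_law mu mD' mV `<< restricted_law mu mD mV.
Proof.
move=> D'D; apply/(null_content_dominatesP _ (restricted_law mu mD mV)) => C mC.
rewrite /= /pushforward /mrestr => DC0.
apply/eqP; rewrite eq_le measure_ge0 andbT -DC0.
apply: le_measure; rewrite ?inE ?(setIC (V @^-1` C)); [exact: mDV|exact: mDV|].
exact: setSI.
Qed.

Lemma restricted_law_RN_le1 D' D (mD' : measurable D') (mD : measurable D) :
  D' `<=` D ->
  {ae restricted_law mu mD mV, forall y, Radon_Nikodym_SigmaFinite.f
    (restricted_law mu mD' mV) (restricted_law mu mD mV) y <= 1}.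
Proof.
move=> D'D; have mDD' : measurable (D `\` D') by exact: measurableD.
pose lawD := restricted_law mu mD mV.
pose p := Radon_Nikodym_SigmaFinite.f (restricted_law mu mD' mV) lawD.
pose q := Radon_Nikodym_SigmaFinite.f (restricted_law mu mDD' mV) lawD.
have domp : restricted_law mu mD' mV `<< lawD by exact: restricted_law_dominates.
have domq : restricted_law mu mDD' mV `<< lawD.
  by apply: restricted_law_dominates => x [].
have pint : lawD.-integrable setT p := Radon_Nikodym_SigmaFinite.f_integrable domp.
have qint : lawD.-integrable setT q := Radon_Nikodym_SigmaFinite.f_integrable domq.
have p0 y : 0 <= p y := Radon_Nikodym_SigmaFinite.f_ge0 domp y.
have q0 y : 0 <= q y := Radon_Nikodym_SigmaFinite.f_ge0 domq y.
(* The derivatives for [D'] and [D `\` D'] add up to 1. *)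
have pq1 : ae_eq lawD setT (p \+ q) (cst 1).
  apply: integral_ae_eq => //; first exact: integrableD.
  move=> C _ mC; rewrite ge0_integralD //; last 2 first.
  - exact: measurable_funTS (measurable_int _ pint).
  - exact: measurable_funTS (measurable_int _ qint).
  rewrite -!Radon_Nikodym_SigmaFinite.f_integral // integral_cst //= mul1e.
  rewrite /= /pushforward /mrestr -measureU; last 3 first.
  - by rewrite setIC; exact: mDV.
  - by rewrite setIC; exact: mDV.
  - by apply/seteqP; split=> x //= [[_ ?] [_ []]].
  congr (_ _); apply/seteqP; split=> x /=; first by move=> [[? /D'D]|[? []]].
  by case=> VCx Dx; case: (pselect (D' x)); [left|right].
by apply: filterS pq1 => y /(_ I) /= <-; rewrite leeDl.
Qed.

Lemma exists_cond_prob D' D (mD' : measurable D') (mD : measurable D) :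
  D' `<=` D -> exists h : T' -> R,
  [/\ measurable_fun setT h, (forall y, (0 <= h y <= 1)%R) &
      forall C, measurable C ->
        mu (D' `&` V @^-1` C) = \int[mu]_(x in D `&` V @^-1` C) (h (V x))%:E].
Proof.
move=> D'D; pose lawD := restricted_law mu mD mV.
pose p := Radon_Nikodym_SigmaFinite.f (restricted_law mu mD' mV) lawD.
have domp : restricted_law mu mD' mV `<< lawD by exact: restricted_law_dominates.
have p0 y : 0 <= p y := Radon_Nikodym_SigmaFinite.f_ge0 domp y.
have pfin y : p y \is a fin_num := Radon_Nikodym_SigmaFinite.f_fin_num domp y.
have mp : measurable_fun setT p.
  exact: measurable_int (Radon_Nikodym_SigmaFinite.f_integrable domp).
pose h y := fine (mine (p y) 1).
have mh : measurable_fun setT h.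
  by apply: measurableT_comp; [exact: fine_measurable|exact: measurable_mine].
have hp : ae_eq lawD setT (EFin \o h) p.
  apply: filterS (restricted_law_RN_le1 mD' mD D'D) => y py1 _.
  by rewrite /= /h min_l // fineK.
exists h; split => // [y|C mC].
  rewrite /h -(fineK (pfin y)) -EFin_min /=; apply/andP; split.
    by rewrite le_min ler01 andbT fine_ge0.
  by rewrite ge_min lexx orbT.
rewrite -[LHS](restricted_lawE mu mD' mV) (Radon_Nikodym_SigmaFinite.f_integral domp) //.
rewrite -(ge0_integral_restricted_law mu mD mV (psi := EFin \o h)) //; last first.
- by move=> y _; rewrite lee_fin /h fine_ge0 // le_min p0 lee01.
- exact/measurable_funTS/measurable_EFinP.
apply: ae_eq_integral => //.
- exact: measurable_funTS.
- exact/measurable_funTS/measurable_EFinP.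
- by apply: ae_eq_subset (ae_eq_sym hp).
Qed.

End conditional_probability.

Lemma measurable_fun_divr_ge0 d (T : measurableType d) (R : realType) (f g : T -> R) :
  measurable_fun setT f -> measurable_fun setT g -> (forall x, 0 <= g x) ->
  measurable_fun setT (fun x => f x / g x).
Proof.
move=> mf mg g0; rewrite (_ : (fun x => _) = (fun x => f x * g x `^ (-1))).
  exact: measurable_funM mf (measurableT_comp (measurable_powR _) mg).
by apply/funext => x; rewrite powR_inv1.
Qed.

Lemma measureU_density d (T : measurableType d) (R : realType)
    (mu : {measure set T -> \bar R}) (D1 D2 A : set T) (phi1 phi2 : T -> \bar R) :
  measurable D1 -> measurable D2 -> measurable A -> D1 `&` D2 = set0 ->
  measurable_fun A phi1 -> measurable_fun A phi2 ->
  (forall x, A x -> 0 <= phi1 x)%E -> (forall x, A x -> 0 <= phi2 x)%E ->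
  mu (D1 `&` A) = (\int[mu]_(x in A) phi1 x)%E ->
  mu (D2 `&` A) = (\int[mu]_(x in A) phi2 x)%E ->
  mu ((D1 `|` D2) `&` A) = (\int[mu]_(x in A) (phi1 x + phi2 x))%E.
Proof.
move=> mD1 mD2 mA D12 mphi1 mphi2 phi10 phi20 D1E D2E.
rewrite setIUl measureU; [|exact: measurableI|exact: measurableI|].
  by rewrite ge0_integralD // -D1E -D2E.
by rewrite setIACA D12 set0I.
Qed.

Section score_ratio.
Local Open Scope ereal_scope.
Context d dX (Omega : measurableType d) (R : realType) (TX : measurableType dX).
Variables (P : probability Omega R) (U : Omega -> bool * bool) (Y : Omega -> R)
  (X : Omega -> TX) (e : bool * bool -> TX -> R) (a b u0 : bool * bool).
Hypotheses (mU : forall u, measurable (U @^-1` [set u]))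
  (mY : measurable_fun setT Y) (mX : measurable_fun setT X)
  (ab : a != b) (u0ab : u0 = a \/ u0 = b)
  (sab_gt0 : forall x, (0 < e a x + e b x)%R) (PS : principal_scores P U X e).

Let s x := (e a x + e b x)%R.
Let w x := (e u0 x / s x)%R.
Let Uab := U @^-1` [set a; b].

(* The absolute value only matters off [0, 1], where [w] never lands. *)
Let k u t : R := `|if u == u0 then t else 1 - t|%R.

Let mXpre F : measurable F -> measurable (X @^-1` F).
Proof. by move=> mF; rewrite -[X in measurable X]setTI; exact: mX. Qed.

Let me u : measurable_fun setT (e u). Proof. by case: (PS u). Qed.

Let e_ge0 u x : (0 <= e u x)%R. Proof. by case: (PS u) => _ /(_ x) /andP[]. Qed.

Let s_ge0 x : (0 <= s x)%R. Proof. exact: ltW (sab_gt0 x). Qed.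

Let ms : measurable_fun setT s. Proof. exact: measurable_funD. Qed.

Let mw : measurable_fun setT w. Proof. exact: measurable_fun_divr_ge0. Qed.

Let mk u : measurable_fun setT (k u).
Proof.
apply: measurableT_comp; first exact: normr_measurable.
by case: (u == u0); [exact: measurable_id|exact: measurable_funB].
Qed.

Let mUab : measurable Uab. Proof. by rewrite /Uab preimage_setU; exact: measurableU. Qed.

Let e_stratum u x : u = a \/ u = b -> e u x = (k u (w x) * s x)%R.
Proof.
move=> uab; have s_neq0 : s x != 0%R by exact: lt0r_neq0 (sab_gt0 x).
rewrite /k /w; case: ifPn => [/eqP ->|uu0].
  by rewrite ger0_norm ?mulfVK // divr_ge0.
have sE : s x = (e u x + e u0 x)%R.
  rewrite /s; case: uab uu0 => ->; case: u0ab => ->; rewrite ?eqxx // => _.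
  exact: addrC.
have -> : (1 - e u0 x / s x = e u x / s x)%R.
  by apply: (mulIf s_neq0); rewrite mulrBl !mulfVK // mul1r {1}sE addrK.
by rewrite ger0_norm ?mulfVK // divr_ge0.
Qed.

Let scoreE u F : measurable F ->
  P (U @^-1` [set u] `&` X @^-1` F) = \int[P]_(x in X @^-1` F) (e u (X x))%:E.
Proof. by case: (PS u) => _ _; apply. Qed.

Let stratum_ratio_density D1 D2 (gamma : TX -> R) u :
  measurable D1 -> measurable D2 ->
  measurable_fun setT gamma -> (forall y, 0 <= gamma y)%R -> u = a \/ u = b ->
  (forall F, measurable F -> P (D1 `&` X @^-1` F) =
     \int[P]_(x in X @^-1` F) (gamma (X x) * e u (X x))%:E) ->
  (forall F, measurable F -> P (D2 `&` X @^-1` F) =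
     \int[P]_(x in X @^-1` F) (gamma (X x) * s (X x))%:E) ->
  forall F, measurable F ->
    P (D1 `&` X @^-1` F) = \int[P]_(x in D2 `&` X @^-1` F) (k u (w (X x)))%:E.
Proof.
move=> mD1 mD2 mgamma gamma0 uab D1E D2E F mF.
rewrite (ge0_integral_density_transfer mX mD2 measurableT
    (phi := fun x => (gamma (X x) * s (X x))%R) _ _ _
    (psi := fun y => (k u (w y))%:E) (E := F)); last 6 first.
- by apply: measurable_funM; exact: measurableT_comp.
- by move=> x; rewrite mulr_ge0.
- by move=> E mE; rewrite setTI; exact: D2E.
- exact: mF.
- exact/measurable_funTS/measurable_EFinP/measurableT_comp.
- by move=> y _; rewrite lee_fin; exact: normr_ge0.
rewrite setTI D1E //; apply: eq_integral => x _.
by rewrite e_stratum // -EFinM mulrCA.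
Qed.

Let Uab0 : U @^-1` [set a] `&` U @^-1` [set b] = set0.
Proof. by apply/seteqP; split => // x [/= -> ba]; move/eqP: ab; apply. Qed.

Let UabE F : measurable F ->
  P (Uab `&` X @^-1` F) = \int[P]_(x in X @^-1` F) (1 * s (X x))%:E.
Proof.
move=> mF; under eq_integral do rewrite mul1r EFinD.
rewrite /Uab preimage_setU; apply: measureU_density => //; first exact: mXpre.
- by apply/measurable_funTS/measurable_EFinP; exact: measurableT_comp.
- by apply/measurable_funTS/measurable_EFinP; exact: measurableT_comp.
- by move=> x _; rewrite lee_fin.
- by move=> x _; rewrite lee_fin.
- exact: scoreE.
- exact: scoreE.
Qed.

Let stratumE u : u = a \/ u = b -> forall F, measurable F ->
  P (U @^-1` [set u] `&` X @^-1` F) =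
  \int[P]_(x in Uab `&` X @^-1` F) (k u (w (X x)))%:E.
Proof.
move=> uab; apply: (stratum_ratio_density (gamma := cst 1%R)) => //.
by move=> F mF; under eq_integral do rewrite mul1r; exact: scoreE.
Qed.

Section given_event.
Variables (B : set R) (g : TX -> R).
Hypotheses (mB : measurable B) (mg : measurable_fun setT g)
  (g01 : forall y, (0 <= g y <= 1)%R).
Hypothesis gE : forall u F, measurable F ->
  P (setT `&` Y @^-1` B `&` U @^-1` [set u] `&` X @^-1` F) =
  \int[P]_(x in setT `&` U @^-1` [set u] `&` X @^-1` F) (g (X x))%:E.

Let g0 y : (0 <= g y)%R. Proof. by case/andP: (g01 y). Qed.

Let mYB : measurable (Y @^-1` B).
Proof. by rewrite -[X in measurable X]setTI; exact: mY. Qed.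

Let DB := Y @^-1` B `&` Uab.

Let mDB : measurable DB. Proof. exact: measurableI. Qed.

Let event_scoreE u F : measurable F ->
  P (Y @^-1` B `&` U @^-1` [set u] `&` X @^-1` F) =
  \int[P]_(x in X @^-1` F) (g (X x) * e u (X x))%:E.
Proof.
move=> mF; have := gE u mF; rewrite !setTI => ->.
rewrite (ge0_integral_density_transfer mX (mU u) measurableT
    (phi := fun x => e u (X x)) _ _ _ (psi := fun y => (g y)%:E) (E := F));
  last 6 first.
- exact: measurableT_comp.
- by [].
- by move=> E mE; rewrite setTI; exact: scoreE.
- exact: mF.
- exact/measurable_funTS/measurable_EFinP.
- by move=> y _; rewrite lee_fin.
by rewrite setTI; apply: eq_integral => x _; rewrite EFinM.
Qed.

Let DBE F : measurable F ->
  P (DB `&` X @^-1` F) = \int[P]_(x in X @^-1` F) (g (X x) * s (X x))%:E.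
Proof.
move=> mF; under eq_integral do rewrite mulrDr EFinD.
rewrite /DB /Uab preimage_setU setIUr; apply: measureU_density => //.
- exact: measurableI.
- exact: measurableI.
- exact: mXpre.
- by rewrite setIACA Uab0 setI0.
- apply/measurable_funTS/measurable_EFinP.
  by apply: measurable_funM; exact: measurableT_comp.
- apply/measurable_funTS/measurable_EFinP.
  by apply: measurable_funM; exact: measurableT_comp.
- by move=> x _; rewrite lee_fin mulr_ge0.
- by move=> x _; rewrite lee_fin mulr_ge0.
- exact: event_scoreE.
- exact: event_scoreE.
Qed.

Lemma score_ratio_cond_prob : exists h : R -> R,
  [/\ measurable_fun setT h, (forall t, (0 <= h t <= 1)%R) &
      forall u C, measurable C ->
        P (Uab `&` Y @^-1` B `&` U @^-1` [set u] `&` (fun x => w (X x)) @^-1` C) =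
        \int[P]_(x in Uab `&` U @^-1` [set u] `&` (fun x => w (X x)) @^-1` C)
          (h (w (X x)))%:E].
Proof.
have mW : measurable_fun setT (fun x => w (X x)) := measurableT_comp mw mX.
have [h [mh h01 hE]] := exists_cond_prob P mW mDB mUab (@subIsetr _ _ _).
exists h; split => // u C mC.
have [uab|Nuab] := pselect (u = a \/ u = b); last first.
  have Uabu0 : Uab `&` U @^-1` [set u] = set0.
    by apply/seteqP; split => // x [/= Uxab Uxu]; apply: Nuab; rewrite -Uxu.
  by rewrite (setIAC Uab) Uabu0 !set0I measure0 integral_set0.
have Uabu : Uab `&` U @^-1` [set u] = U @^-1` [set u].
  apply/seteqP; split => x /=; first by case.
  by move=> Uxu; split => //; rewrite /Uab /= Uxu.
have mYBu : measurable (Y @^-1` B `&` U @^-1` [set u]) by exact: measurableI.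
have mwC : measurable (w @^-1` C) by rewrite -[X in measurable X]setTI; exact: mw.
(* Both sides become integrals over [Uab] of [k u (w (X x))] times [h (w (X x))]. *)
rewrite (setIAC Uab) Uabu [U @^-1` _ `&` _]setIC.
rewrite (stratum_ratio_density mYBu mDB mg g0 uab (event_scoreE u) DBE mwC).
rewrite [LHS](ge0_integral_density_transfer mW mDB mUab
    (phi := fun x => h (w (X x))) _ _ _ (psi := fun t => (k u t)%:E) (E := C)).
rewrite [RHS](ge0_integral_density_transfer mX (mU u) mUab
    (phi := fun x => k u (w (X x))) _ _ _ (psi := fun y => (h (w y))%:E)
    (E := w @^-1` C)).
- by apply: eq_integral => x _; rewrite muleC.
- exact: measurableT_comp (mk u) mW.
- by move=> x; exact: normr_ge0.
- exact: stratumE.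
- exact: mwC.
- by apply/measurable_funTS/measurable_EFinP; exact: measurableT_comp.
- by move=> y _; rewrite lee_fin; case/andP: (h01 (w y)).
- exact: measurableT_comp mh mW.
- by move=> x; case/andP: (h01 (w (X x))).
- exact: hE.
- exact: mC.
- exact/measurable_funTS/measurable_EFinP.
- by move=> t _; rewrite lee_fin; exact: normr_ge0.
Qed.

End given_event.

Lemma cond_indep_score_ratio : cond_indep P setT Y U X ->
  cond_indep P (U @^-1` [set a; b]) Y U
    (fun x => e u0 (X x) / (e a (X x) + e b (X x)))%R.
Proof.
move=> CI B mB; have [g [mg g01 gE]] := CI B mB.
exact: (score_ratio_cond_prob mB mg g01 gE).
Qed.

End score_ratio.

Section independent_event.
Local Open Scope ereal_scope.
Context d dW (Omega : measurableType d) (R : realType) (TW : measurableType dW).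
Context (K : Type).
Variables (P : probability Omega R) (G A : set Omega) (Y : Omega -> R)
  (U : Omega -> K) (W : Omega -> TW).
Hypotheses (mG : measurable G) (mA : measurable A)
  (mU : forall u, measurable (U @^-1` [set u])) (mW : measurable_fun setT W).
Hypothesis indepG : forall B u C, measurable B -> measurable C ->
  P (G `&` (A `&` Y @^-1` B `&` U @^-1` [set u] `&` W @^-1` C)) =
  P G * P (A `&` Y @^-1` B `&` U @^-1` [set u] `&` W @^-1` C).

Lemma cond_indep_setI_indep : cond_indep P A Y U W -> cond_indep P (G `&` A) Y U W.
Proof.
move=> CI B mB; have [h [mh h01 hE]] := CI B mB; exists h; split => // u C mC.
have PGE : P G = (fine (P G))%:E by rewrite fineK // fin_num_measure.
have mAu : measurable (A `&` U @^-1` [set u]) by exact: measurableI.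
(* By independence, the law of [W] on [G `&` A `&` U @^-1` [set u]] has the
   constant density [P G] with respect to its law on [A `&` U @^-1` [set u]]. *)
have GAu_density E : measurable E ->
    P (G `&` A `&` U @^-1` [set u] `&` W @^-1` E) =
    \int[P]_(x in A `&` U @^-1` [set u] `&` W @^-1` E) (fine (P G))%:E.
  move=> mE; have := indepG u measurableT mE; rewrite preimage_setT setIT !setIA => ->.
  rewrite integral_cst -?PGE //; apply: measurableI => //.
  by rewrite -[X in measurable X]setTI; exact: mW.
rewrite (_ : G `&` A `&` _ `&` _ `&` _ =
    G `&` (A `&` Y @^-1` B `&` U @^-1` [set u] `&` W @^-1` C)); last by rewrite !setIA.
rewrite indepG // hE //.
rewrite (ge0_integral_density_transfer mW _ mAu (phi := cst (fine (P G))) _ _ GAu_density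
    (psi := fun t => (h t)%:E) (E := C)).
- rewrite /= ge0_integralZr; last 4 first.
  + apply: measurableI => //; rewrite -[X in measurable X]setTI; exact: mW.
  + by apply/measurable_funTS/measurable_EFinP; exact: measurableT_comp.
  + by move=> x _; rewrite lee_fin; case/andP: (h01 (W x)).
  + by rewrite lee_fin fine_ge0.
  by rewrite muleC; congr (_ * _).
- by apply: measurableI => //; exact: measurableI.
- exact: measurable_cst.
- by move=> x; rewrite fine_ge0.
- exact: mC.
- exact/measurable_funTS/measurable_EFinP.
- by move=> y _; rewrite lee_fin; case/andP: (h01 y).
Qed.

End independent_event.

Lemma measurable_bool2 (A : set (bool * bool)) : measurable A.
Proof.
rewrite -(image_id A) -bigcup_imset1; apply: fin_bigcup_measurable.
  exact: finite_finset.
move=> [x y] _; rewrite (_ : [set _] = [set x] `*` [set y]); first exact: measurableX.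
by apply/seteqP; split => -[? ?] /= [-> ->].
Qed.

Section randomized_trial.
Local Open Scope ereal_scope.
Context d dX (Omega : measurableType d) (R : realType) (TX : measurableType dX).
Variables (P : probability Omega R) (Z S1 S0 : Omega -> bool) (Y1 Y0 : Omega -> R)
  (X : Omega -> TX) (e : bool * bool -> TX -> R).
Hypotheses (mZ : measurable_fun setT Z) (mS1 : measurable_fun setT S1)
  (mS0 : measurable_fun setT S0) (mX : measurable_fun setT X)
  (PS : principal_scores P (fun w => (S1 w, S0 w)) X e).

Let U w := (S1 w, S0 w).
Let V w := (S1 w, S0 w, Y1 w, Y0 w, X w).

Hypothesis randomization : forall z (D : set (bool * bool * R * R * TX)), measurable D ->
  P (Z @^-1` [set z] `&` V @^-1` D) = P (Z @^-1` [set z]) * P (V @^-1` D).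

Let mU u : measurable (U @^-1` [set u]).
Proof.
rewrite -[X in measurable X]setTI; apply: measurable_fun_pair => //.
exact: measurable_bool2.
Qed.

Let randomization_event z (pi : bool * bool * R * R * TX -> R) (f : TX -> R)
    (A : set (bool * bool)) B u C :
  measurable_fun setT pi -> measurable_fun setT f -> measurable B -> measurable C ->
  let E := U @^-1` A `&` (fun w => pi (V w)) @^-1` B `&` U @^-1` [set u] `&`
    (fun w => f (X w)) @^-1` C in
  P (Z @^-1` [set z] `&` E) = P (Z @^-1` [set z]) * P E.
Proof.
move=> mpi mf mB mC; pose strat (t : bool * bool * R * R * TX) := t.1.1.1.
have mstrat : measurable_fun setT strat.
  by do 2![apply: measurableT_comp; first exact: measurable_fst]; exact: measurable_fst.
have mpre d' (T' : measurableType d') (g : bool * bool * R * R * TX -> T') G :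
    measurable_fun setT g -> measurable G -> measurable (g @^-1` G).
  by move=> mg mG; rewrite -[X in measurable X]setTI; exact: mg.
(* [E] is convertible to [V @^-1` D] for the following [D]. *)
apply: (randomization z (D := strat @^-1` A `&` pi @^-1` B `&` strat @^-1` [set u] `&`
  (fun t => f t.2) @^-1` C)).
apply: measurableI; [apply: measurableI; [apply: measurableI|]|].
- by apply: mpre => //; exact: measurable_bool2.
- exact: mpre.
- by apply: mpre => //; exact: measurable_bool2.
- by apply: mpre => //; apply: measurableT_comp => //; exact: measurable_snd.
Qed.

Lemma cond_indep_assigned_strata z (pi : bool * bool * R * R * TX -> R) a b u0 :
  measurable_fun setT pi -> measurable_fun setT (fun w => pi (V w)) ->
  a != b -> u0 = a \/ u0 = b -> (forall x, (0 < e a x + e b x)%R) ->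
  cond_indep P setT (fun w => pi (V w)) U X ->
  cond_indep P (Z @^-1` [set z] `&` U @^-1` [set a; b]) (fun w => pi (V w)) U
    (fun w => e u0 (X w) / (e a (X w) + e b (X w)))%R.
Proof.
move=> mpi mY ab u0ab pos CI.
have mratio : measurable_fun setT (fun x => e u0 x / (e a x + e b x))%R.
  have me u : measurable_fun setT (e u) by case: (PS u).
  apply: measurable_fun_divr_ge0 => //; first exact: measurable_funD.
  by move=> x; exact: ltW.
apply: cond_indep_setI_indep (measurableT_comp mratio mX) _ _.
- by rewrite -[X in measurable X]setTI; exact: mZ.
- by rewrite preimage_setU; exact: measurableU.
- exact: mU.
- by move=> B u C mB mC; exact: randomization_event.
- exact: cond_indep_score_ratio.
Qed.

Lemma treated_selected_strata :
  Z @^-1` [set true] `&` (fun w => if Z w then S1 w else S0 w) @^-1` [set true] =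
  Z @^-1` [set true] `&` U @^-1` [set ssbar; ss].
Proof.
apply/seteqP; split => w /= [Zw]; rewrite Zw => Sw; split => //.
  by rewrite /U Sw; case: (S0 w); [right|left].
by case: Sw => -[].
Qed.

Lemma control_unselected_strata :
  Z @^-1` [set false] `&` (fun w => if Z w then S1 w else S0 w) @^-1` [set false] =
  Z @^-1` [set false] `&` U @^-1` [set ssbar; sbarsbar].
Proof.
apply/seteqP; split => w /= [Zw]; rewrite Zw => Sw; split => //.
  by rewrite /U Sw; case: (S1 w); [left|right].
by case: Sw => -[].
Qed.

End randomized_trial.

Theorem lemmaA8 (d dX : measure_display) (Omega : measurableType d) (R : realType)
  (TX : measurableType dX) (P : probability Omega R)
  (Z S1 S0 : Omega -> bool) (Y1 Y0 : Omega -> R) (X : Omega -> TX)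
  (e : bool * bool -> TX -> R) :
  measurable_fun setT Z -> measurable_fun setT S1 -> measurable_fun setT S0 ->
  measurable_fun setT Y1 -> measurable_fun setT Y0 -> measurable_fun setT X ->
  let U := fun w => (S1 w, S0 w) in
  let S := fun w => if Z w then S1 w else S0 w in
  (* Randomization: Z independent of (S(1), S(0), Y(1), Y(0), X) *)
  (forall (z : bool) (D : set (bool * bool * R * R * TX)), measurable D ->
     P (Z @^-1` [set z] `&` (fun w => (S1 w, S0 w, Y1 w, Y0 w, X w)) @^-1` D) =
     (P (Z @^-1` [set z]) * P ((fun w => (S1 w, S0 w, Y1 w, Y0 w, X w)) @^-1` D))%E) ->
  (* Monotonicity: S(1) >= S(0) almost surely *)
  P [set w | S1 w = false /\ S0 w = true] = 0%E ->
  (* General principal ignorability *)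
  cond_indep P setT Y1 U X -> cond_indep P setT Y0 U X ->
  (* principal scores and positivity *)
  principal_scores P U X e ->
  (forall x, 0 < e ssbar x + e ss x) -> (forall x, 0 < e ssbar x + e sbarsbar x) ->
  (0 < P (Z @^-1` [set true] `&` S @^-1` [set true]))%E ->
  (0 < P (Z @^-1` [set false] `&` S @^-1` [set false]))%E ->
  (forall u, u = ssbar \/ u = ss ->
     cond_indep P (Z @^-1` [set true] `&` S @^-1` [set true]) Y1 U
       (fun w => e1 e u (X w))) /\
  (forall u, u = ssbar \/ u = sbarsbar ->
     cond_indep P (Z @^-1` [set false] `&` S @^-1` [set false]) Y0 U
       (fun w => e0 e u (X w))).
Proof.
move=> mZ mS1 mS0 mY1 mY0 mX U S randomization _ CI1 CI0 PS pos1 pos0 _ _.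
have mY1' : measurable_fun setT (fun t : bool * bool * R * R * TX => t.1.1.2).
  by apply: measurableT_comp; [exact: measurable_snd|exact: measurableT_comp].
have mY0' : measurable_fun setT (fun t : bool * bool * R * R * TX => t.1.2).
  by apply: measurableT_comp; [exact: measurable_snd|exact: measurable_fst].
split => u uab; rewrite /S.
- rewrite treated_selected_strata.
  exact: (cond_indep_assigned_strata mZ mS1 mS0 mX PS randomization true
    (a := ssbar) (b := ss) mY1' mY1 isT uab pos1 CI1).
- rewrite control_unselected_strata.
  exact: (cond_indep_assigned_strata mZ mS1 mS0 mX PS randomization false
    (a := ssbar) (b := sbarsbar) mY0' mY0 isT uab pos0 CI0).
Qed.
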